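(* Let $\mathcal{A}$ be the Bose--Mesner algebra of a symmetric association scheme with adjacency matrices $A_0=I,A_1,\dots,A_d$ of size $n$ and first eigenmatrix $P=(P_{i,j})_{0\leq i,j\leq d}$. For indeterminates $X_{i,j}$ ($0\leq i<j\leq d$) define \[ e_k=\sum_{0\leq i<j\leq d}P_{k,i}P_{k,j}X_{i,j}+\sum_{i=0}^dP_{k,i}^2-n\qquad(k=1,\dots,d). \] Let $w_0,\dots,w_d$ be nonzero complex numbers and $a_{i,j}$ ($0\leq i,j\leq d$, $i\neq j$) complex numbers with $\frac{w_j}{w_i}+\frac{w_i}{w_j}=a_{i,j}$ for all $i\neq j$. Let $W=\sum_{j=0}^dw_jA_j$. Then the following are equivalent: (i) $W$ is a type-II matrix; (ii) $(a_{i,j})_{0\leq i<j\leq d}$ is a common zero of $e_1,\dots,e_d$. Moreover, if one of these holds, $a_{i,j}\in\mathbb{R}$ for all $0\leq i<j\leq d$, and $-2<a_{i_0,i_1}<2$ for some $0\leq i_0<i_1\leq d$, then $W$ is a scalar multiple of a complex Hadamard matrix.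
   Context: A symmetric association scheme with adjacency matrices $A_0=I,A_1,\dots,A_d$ means: the $A_i$ are symmetric $n\times n$ $(0,1)$-matrices summing to the all-ones matrix $J$, and their span $\mathcal{A}$ (the Bose--Mesner algebra) is closed under multiplication; $\mathcal{A}$ has primitive idempotents $E_0=\frac1nJ,E_1,\dots,E_d$, and the first eigenmatrix $P$ is defined by $A_j=\sum_{i}P_{i,j}E_i$. A type-II matrix is an $n\times n$ matrix $W$ with nonzero complex entries with $W(W^{(-)})^\top=nI$, $W^{(-)}$ the entrywise inverse. A complex Hadamard matrix is an $n\times n$ complex matrix $H$ with all entries of absolute value $1$ and $HH^*=nI$. *)

(* The complex numbers are modelled by an arbitrary
   C : numClosedFieldType (e.g. complex R for R : realType). *)
From HB Require Import structures.
From mathcomp Require Import all_boot all_order all_algebra.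
Set Implicit Arguments.
Unset Strict Implicit.
Unset Printing Implicit Defensive.
Import Order.TTheory GRing.Theory Num.Theory.
Local Open Scope ring_scope.

Section Defs.
Variable C : numClosedFieldType.

Definition in_span n d (A : 'I_d.+1 -> 'M[C]_n) (M : 'M[C]_n) : Prop :=
  exists c : 'I_d.+1 -> C, M = \sum_(i < d.+1) c i *: A i.

Definition sym_assoc_scheme n d (A : 'I_d.+1 -> 'M[C]_n) : Prop :=
  [/\ A ord0 = 1%:M,
      forall i, (A i)^T = A i,
      forall i x y, A i x y = 0 \/ A i x y = 1,
      \sum_(i < d.+1) A i = const_mx 1
    & forall i j, in_span A (A i *m A j)].

Definition prim_idempotents_eigenmatrix n d (A E : 'I_d.+1 -> 'M[C]_n)
    (P : 'M[C]_d.+1) : Prop :=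
  E ord0 = n%:R^-1 *: const_mx 1 /\
  [/\ forall i, in_span A (E i),
      forall i, E i != 0,
      forall i j, E i *m E j = if i == j then E i else 0,
      \sum_(i < d.+1) E i = 1%:M
    & forall j, A j = \sum_(i < d.+1) P i j *: E i].

(* Value of e_k at the point X_{i,j} := a i j (0 <= i < j <= d). *)
Definition e_val n d (P : 'M[C]_d.+1) (a : 'I_d.+1 -> 'I_d.+1 -> C)
    (k : 'I_d.+1) : C :=
  \sum_(i < d.+1) \sum_(j < d.+1 | (i < j)%N) P k i * P k j * a i j
  + \sum_(i < d.+1) P k i ^+ 2 - n%:R.

Definition type_II n (W : 'M[C]_n) : Prop :=
  (forall x y, W x y != 0) /\
  W *m (map_mx (fun z => z^-1) W)^T = n%:R%:M.

Definition complex_hadamard n (H : 'M[C]_n) : Prop :=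
  (forall x y, `|H x y| = 1) /\
  H *m (map_mx (fun z => z^*) H)^T = n%:R%:M.

End Defs.

(** The entrywise inverse of [W = \sum_j w_j A_j] is [\sum_j w_j^-1 A_j], so
   [W (W^(-))^T] lies in the Bose-Mesner algebra and its eigenvalue on [E_k]
   is [\sum_(i,j) (w_i/w_j) P_(k,i) P_(k,j) = e_k(a) + n]. Hence [W] is
   type II iff these eigenvalues all equal [n]; for [k = 0] this follows from
   the others by taking traces, as [tr (W (W^(-))^T) = n^2] and
   [tr E_0 = 1].
   For the Hadamard part, [r + r^-1] real forces [r] real or [|r| = 1], and a
   real [r] gives [|r + r^-1| >= 2]. So [w_(i1)/w_(i0)] is not real and has
   modulus 1; any other [w_k] has a ratio of modulus 1 with [w_(i0)] or with
   [w_(i1)], since otherwise both ratios, hence their quotient, are real. All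
   entries of [W] then have a common modulus [m] and [W/m] is Hadamard. *)
From HB Require Import structures.
From mathcomp Require Import all_boot all_order all_algebra.
From mathcomp Require Import ring.
Import Order.TTheory GRing.Theory Num.Theory.
Local Open Scope ring_scope.

Section SchemeEntries.
Context {C : numDomainType} {n d : nat} {A : 'I_d.+1 -> 'M[C]_n}.
Hypothesis A01 : forall i x y, A i x y = 0 \/ A i x y = 1.
Hypothesis sumA : \sum_i A i = const_mx 1.

Lemma scheme_entry_index x y : exists j : 'I_d.+1,
  forall c : 'I_d.+1 -> C, (\sum_i c i *: A i) x y = c j.
Proof.
have sum_xy : \sum_i A i x y = 1.
  by have := congr1 (fun M : 'M[C]_n => M x y) sumA; rewrite summxE mxE.
have A_ge0 i : 0 <= A i x y by case: (A01 i x y) => ->; rewrite ?lexx ?ler01.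
have /existsP [j /eqP Aj1] : [exists j, A j x y == 1].
  apply: contraT => /existsPn A_neq1.
  move: sum_xy; rewrite big1 => [/eqP|i _]; first by rewrite eq_sym oner_eq0.
  by case: (A01 i x y) => // Ai1; move: (A_neq1 i); rewrite Ai1 eqxx.
have Ai0 i : i != j -> A i x y = 0.
  move=> neq_ij; case: (A01 i x y) => // Ai1; move: sum_xy.
  rewrite (bigD1 j) //= (bigD1 i) //= Aj1 Ai1 => /(congr1 (fun t => t - 1)).
  rewrite addrC addrK subrr => /eqP; rewrite paddr_eq0 ?oner_eq0 ?ler01 //.
  exact: sumr_ge0.
exists j => c; rewrite summxE (bigD1 j) //= big1 => [|i /Ai0 Ai_0].
  by rewrite !mxE Aj1 mulr1 addr0.
by rewrite !mxE Ai_0 mulr0.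
Qed.

Lemma map_scheme_comb (f : C -> C) (c : 'I_d.+1 -> C) :
  map_mx f (\sum_i c i *: A i) = \sum_i f (c i) *: A i.
Proof.
apply/matrixP => x y; rewrite mxE.
by have [j entry_j] := scheme_entry_index x y; rewrite !entry_j.
Qed.

End SchemeEntries.

Section EigenDecomposition.
Context {C : fieldType} {n d : nat} {A E : 'I_d.+1 -> 'M[C]_n}.
Context {P : 'M[C]_d.+1}.
Hypothesis mulE : forall i j, E i *m E j = if i == j then E i else 0.
Hypothesis A_eigen : forall j, A j = \sum_i P i j *: E i.

Lemma mulmx_eigen_comb_E (c : 'I_d.+1 -> C) k :
  (\sum_l c l *: E l) *m E k = c k *: E k.
Proof.
rewrite mulmx_suml (bigD1 k) //= big1 => [|l neq_lk].
  by rewrite -scalemxAl mulE eqxx addr0.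
by rewrite -scalemxAl mulE (negbTE neq_lk) scaler0.
Qed.

Lemma mulmx_scheme_comb (b c : 'I_d.+1 -> C) :
  (\sum_i b i *: A i) *m (\sum_j c j *: A j)
  = \sum_k (\sum_i \sum_j b i * c j * (P k i * P k j)) *: E k.
Proof.
have mulA i j : A i *m A j = \sum_k (P k i * P k j) *: E k.
  rewrite [A j]A_eigen mulmx_sumr; apply: eq_bigr => k _.
  by rewrite -scalemxAr [A i]A_eigen mulmx_eigen_comb_E scalerA mulrC.
rewrite mulmx_suml.
under eq_bigr => i _.
  rewrite mulmx_sumr.
  under eq_bigr => j _ do rewrite -scalemxAl -scalemxAr mulA scalerA scaler_sumr.
  rewrite exchange_big /=.
  over.
rewrite exchange_big /=; apply: eq_bigr => k _; rewrite scaler_suml.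
apply: eq_bigr => i _; rewrite scaler_suml.
by apply: eq_bigr => j _; rewrite scalerA.
Qed.

Hypothesis E_neq0 : forall k, E k != 0.
Hypothesis sumE : \sum_k E k = 1%:M.

Lemma eigen_comb_eq_scalar (c : 'I_d.+1 -> C) (s : C) :
  \sum_k c k *: E k = s%:M <-> forall k, c k = s.
Proof.
split=> [comb_s k | c_s].
  have /eqP := mulmx_eigen_comb_E c k.
  rewrite comb_s mul_scalar_mx -subr_eq0 -scalerBl scaler_eq0.
  by rewrite (negbTE (E_neq0 k)) orbF subr_eq0 => /eqP.
by under eq_bigr do rewrite c_s; rewrite -scaler_sumr sumE scalemx1.
Qed.

End EigenDecomposition.

Lemma sum_pairs_split (R : nmodType) m (f : 'I_m -> 'I_m -> R) :
  \sum_(i < m) \sum_(j < m) f i j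
  = \sum_(i < m) \sum_(j < m | (i < j)%N) (f i j + f j i) + \sum_(i < m) f i i.
Proof.
have split_row i : \sum_(j < m) f i j
    = \sum_(j < m | (i < j)%N) f i j + \sum_(j < m | (j < i)%N) f i j + f i i.
  rewrite (bigD1 i) //= addrC (bigID (fun j : 'I_m => (i < j)%N)) /=.
  by congr (_ + _); congr (_ + _); apply: eq_bigl => j; rewrite -val_eqE /=; case: ltngtP.
under eq_bigr do rewrite split_row.
under [in RHS]eq_bigr do rewrite big_split.
rewrite !big_split /=; congr (_ + _); congr (_ + _).
under [in RHS]eq_bigr do rewrite big_mkcond.
by rewrite [in RHS]exchange_big; apply: eq_bigr => i _; rewrite big_mkcond.
Qed.

Lemma sum_ratio_quadratic_form {C : fieldType} {d : nat} (p : 'I_d.+1 -> C)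
    {w : 'I_d.+1 -> C} {a : 'I_d.+1 -> 'I_d.+1 -> C} :
  (forall j, w j != 0) ->
  (forall i j, i != j -> w j / w i + w i / w j = a i j) ->
  \sum_(i < d.+1) \sum_(j < d.+1) w i / w j * (p i * p j)
  = \sum_(i < d.+1) \sum_(j < d.+1 | (i < j)%N) p i * p j * a i j
    + \sum_(i < d.+1) p i ^+ 2.
Proof.
move=> w_neq0 w_a; rewrite sum_pairs_split; congr (_ + _).
  apply: eq_bigr => i _; apply: eq_bigr => j lt_ij.
  have neq_ij : i != j by rewrite -val_eqE /= ltn_eqF.
  by rewrite -(w_a i j neq_ij); ring.
by apply: eq_bigr => i _; rewrite divff // mul1r expr2.
Qed.

Lemma mxtrace_mul_entrywise_inv {C : fieldType} {n : nat} {W : 'M[C]_n} :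
  (forall x y, W x y != 0) ->
  \tr (W *m (map_mx (fun z => z^-1) W)^T) = n%:R * n%:R.
Proof.
move=> W_neq0; rewrite /mxtrace (eq_bigr (fun _ => n%:R)) => [|x _].
  by rewrite sumr_const card_ord mulr_natr.
rewrite mxE (eq_bigr (fun _ => 1)) => [|y _]; first by rewrite sumr_const card_ord.
by rewrite !mxE divff.
Qed.

Lemma type_II_iff_e_val {C : numClosedFieldType} {n d : nat}
  {A E : 'I_d.+1 -> 'M[C]_n} {P : 'M[C]_d.+1}
  {w : 'I_d.+1 -> C} {a : 'I_d.+1 -> 'I_d.+1 -> C} :
  sym_assoc_scheme A ->
  prim_idempotents_eigenmatrix A E P ->
  (forall j, w j != 0) ->
  (forall i j, i != j -> w j / w i + w i / w j = a i j) ->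
  type_II (\sum_(j < d.+1) w j *: A j) <->
  (forall k : 'I_d.+1, k != ord0 -> e_val n P a k = 0).
Proof.
move=> [_ A_sym A01 sumA _] [E0 [_ E_neq0 mulE sumE A_eigen]] w_neq0 w_a.
set W := \sum_j w j *: A j.
have W_neq0 x y : W x y != 0.
  by have [j ->] := scheme_entry_index A01 sumA x y.
have invW_tr : (map_mx (fun z => z^-1) W)^T = \sum_j (w j)^-1 *: A j.
  rewrite map_scheme_comb // linear_sum; apply: eq_bigr => j _.
  by rewrite linearZ /= A_sym.
have WW : W *m (map_mx (fun z => z^-1) W)^T = \sum_k (e_val n P a k + n%:R) *: E k.
  rewrite invW_tr (mulmx_scheme_comb mulE A_eigen); apply: eq_bigr => k _.
  by rewrite (sum_ratio_quadratic_form _ w_neq0 w_a) subrK.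
have n_neq0 : n%:R != 0 :> C.
  rewrite pnatr_eq0; apply: contra (E_neq0 ord0) => /eqP n0.
  by apply/eqP/matrixP => -[x x_lt_n] y; exfalso; move: x_lt_n; rewrite n0.
have trE0 : \tr (E ord0) = 1.
  rewrite E0 mxtraceZ /mxtrace (eq_bigr (fun _ => 1)) => [|x _]; last by rewrite mxE.
  by rewrite sumr_const card_ord mulVf.
have trE : \sum_(k | k != ord0) \tr (E k) = n%:R - 1.
  have := congr1 mxtrace sumE; rewrite raddf_sum (bigD1 ord0) //= mxtrace1 trE0.
  by move=> <-; rewrite addrC addrK.
rewrite /type_II WW eigen_comb_eq_scalar //; split=> [[_ e_n] k _ | e0].
  by apply: (addIr n%:R); rewrite add0r e_n.
split=> // k; suff e_ord0 : e_val n P a ord0 = 0.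
  by case: (eqVneq k ord0) => [->|/e0 ->]; rewrite ?e_ord0 add0r.
have := mxtrace_mul_entrywise_inv W_neq0; rewrite WW raddf_sum (bigD1 ord0) //=.
under eq_bigr => l /e0 -> do rewrite add0r mxtraceZ.
rewrite -mulr_sumr trE mxtraceZ trE0 mulr1 mulrBr mulr1 -addrA (addrC n%:R) subrK.
by rewrite -{2}[_ * _]add0r => /addIr.
Qed.

Lemma real_or_norm1_of_addrV_real {C : numClosedFieldType} {r : C} :
  r != 0 -> r + r^-1 \is Num.real -> r \is Num.real \/ `|r| = 1.
Proof.
move=> r_neq0 /CrealP; rewrite rmorphD fmorphV /=; set s := r^* => conj_sum.
have s_neq0 : s != 0 by rewrite conjC_eq0.
have : (r - s) * (1 - (r * s)^-1) = 0.
  have -> : (r - s) * (1 - (r * s)^-1) = (r + r^-1) - (s + s^-1).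
    by field; rewrite r_neq0 s_neq0.
  by rewrite conj_sum subrr.
move/eqP; rewrite mulf_eq0 subr_eq0 => /orP[/eqP r_s | ].
  by left; apply/CrealP.
rewrite subr_eq0 eq_sym invr_eq1 -normCK => /eqP norm2; right.
by apply/eqP; rewrite -sqrp_eq1 ?normr_ge0 // norm2.
Qed.

Lemma real_addrV_norm_ge2 {R : numFieldType} {r : R} :
  r != 0 -> r \is Num.real -> 2 <= `|r + r^-1|.
Proof.
move=> r_neq0 r_real.
rewrite -ler_sqr ?nnegrE ?normr_ge0 ?ler0n // real_normK ?rpredD ?rpredV //.
have -> : (r + r^-1) ^+ 2 = (r - r^-1) ^+ 2 + 2 ^+ 2 by field.
by rewrite lerDr -realEsqr rpredB ?rpredV.
Qed.

Section CommonModulus.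
Context {C : numClosedFieldType} {d : nat}.
Context {w : 'I_d.+1 -> C} {a : 'I_d.+1 -> 'I_d.+1 -> C}.
Hypothesis w_neq0 : forall j, w j != 0.
Hypothesis w_a : forall i j, i != j -> w j / w i + w i / w j = a i j.
Hypothesis a_real : forall i j : 'I_d.+1, (i < j)%N -> a i j \is Num.real.

Let ratio_neq0 i j : w j / w i != 0.
Proof. by rewrite mulf_neq0 ?invr_eq0. Qed.

Lemma ratio_addrV {i j} : i != j -> w j / w i + (w j / w i)^-1 = a i j.
Proof. by move=> neq_ij; rewrite invf_div w_a. Qed.

Lemma ratio_real_or_norm_eq {i j} :
  i != j -> w j / w i \is Num.real \/ `|w j| = `|w i|.
Proof.
move=> neq_ij; have a_ij_real : a i j \is Num.real.
  case: (ltngtP i j) => [lt_ij | lt_ji | /val_inj eq_ij]; first exact: a_real.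
    by rewrite -(w_a _ _ neq_ij) addrC w_a 1?eq_sym // a_real.
  by rewrite eq_ij eqxx in neq_ij.
have sum_real : w j / w i + (w j / w i)^-1 \is Num.real by rewrite ratio_addrV.
have [|] := real_or_norm1_of_addrV_real (ratio_neq0 i j) sum_real; first by left.
have norm_wi_neq0 : `|w i| != 0 by rewrite normr_eq0.
by rewrite normf_div => /(canRL (divfK norm_wi_neq0)); rewrite mul1r; right.
Qed.

Lemma common_modulus :
  (exists i0 i1 : 'I_d.+1, (i0 < i1)%N /\ -2 < a i0 i1 < 2) ->
  exists i0, forall k, `|w k| = `|w i0|.
Proof.
move=> [i0 [i1 [lt_01 /andP[gt_m2 lt_2]]]].
have neq_01 : i0 != i1 by rewrite -val_eqE /= ltn_eqF.
have r_nonreal : w i1 / w i0 \isn't Num.real.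
  apply/negP => r_real; have := real_addrV_norm_ge2 (ratio_neq0 i0 i1) r_real.
  rewrite ratio_addrV // real_ler_normr ?a_real // lerNr.
  by case/orP=> [/(lt_le_trans lt_2) | /(lt_le_trans gt_m2)]; rewrite ltxx.
have norm_10 : `|w i1| = `|w i0|.
  by case: (ratio_real_or_norm_eq neq_01) => // r_real; rewrite r_real in r_nonreal.
exists i0 => k; case: (eqVneq i0 k) => [<- // | neq_0k].
case: (eqVneq i1 k) => [<- // | neq_1k].
have [s_real | //] := ratio_real_or_norm_eq neq_0k.
have [t_real | -> //] := ratio_real_or_norm_eq neq_1k.
suff : w i1 / w i0 \is Num.real by rewrite (negbTE r_nonreal).
have -> : w i1 / w i0 = (w k / w i0) / (w k / w i1) by field; rewrite !w_neq0.
by rewrite rpredM ?rpredV.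
Qed.

End CommonModulus.

Lemma scaled_complex_hadamard {C : numClosedFieldType} {n : nat} {W : 'M[C]_n}
    (m : C) :
  0 < m -> (forall x y, `|W x y| = m) ->
  W *m (map_mx (fun z => z^-1) W)^T = n%:R%:M -> complex_hadamard (m^-1 *: W).
Proof.
move=> m_gt0 norm_W WW; have m_neq0 : m != 0 by rewrite gt_eqF.
have conj_entry x y : (m^-1 * W x y)^* = m * (W x y)^-1.
  rewrite rmorphM fmorphV /= (geC0_conj (ltW m_gt0)) (invC_norm (W x y)) norm_W.
  by field.
split=> [x y | ]; first by rewrite mxE normrM normfV norm_W gtr0_norm ?mulVf.
have -> : map_mx (fun z => z^*) (m^-1 *: W) = m *: map_mx (fun z => z^-1) W.
  by apply/matrixP => x y; rewrite !mxE conj_entry.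
by rewrite linearZ /= -scalemxAl -scalemxAr WW scalerA mulVf // scale1r.
Qed.

Theorem lemma3p2 (C : numClosedFieldType) (n d : nat)
  (A E : 'I_d.+1 -> 'M[C]_n) (P : 'M[C]_d.+1)
  (w : 'I_d.+1 -> C) (a : 'I_d.+1 -> 'I_d.+1 -> C) :
  sym_assoc_scheme A ->
  prim_idempotents_eigenmatrix A E P ->
  (forall j, w j != 0) ->
  (forall i j, i != j -> w j / w i + w i / w j = a i j) ->
  let W := \sum_(j < d.+1) w j *: A j in
  (type_II W <-> (forall k : 'I_d.+1, k != ord0 -> e_val n P a k = 0)) /\
  ((type_II W \/ (forall k : 'I_d.+1, k != ord0 -> e_val n P a k = 0)) ->
   (forall i j : 'I_d.+1, (i < j)%N -> a i j \is Num.real) ->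
   (exists i0 i1 : 'I_d.+1, (i0 < i1)%N /\ -2 < a i0 i1 < 2) ->
   exists (c : C) (H : 'M[C]_n), complex_hadamard H /\ W = c *: H).
Proof.
move=> scheme eigen w_neq0 w_a W.
have II_iff := type_II_iff_e_val scheme eigen w_neq0 w_a.
split=> // II_or a_real small.
have [_ WW] : type_II W by case: II_or => // /II_iff.
have [i0 norm_w] := common_modulus w_neq0 w_a a_real small.
exists `|w i0|, (`|w i0|^-1 *: W); split.
  apply: scaled_complex_hadamard WW; first by rewrite normr_gt0.
  case: scheme => _ _ A01 sumA _ x y.
  by have [j ->] := scheme_entry_index A01 sumA x y; rewrite norm_w.
by rewrite scalerA divff ?normr_eq0 // scale1r.
Qed.
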